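(* Let $b\in\{0,1\}^d$ be a bitmap and let $q\in\mathbb{R}^d$ be the effective gradient associated with $b$. Then there exists a bitmap $\bar b\ge b$ such that $q$ equals the simple gradient associated with $\bar b$.
   Context: Jackson network with a tree topology on nodes $\{1,\dots,d\}$, root node $1$; $i\to j$ means node $j$ is a child of node $i$. Customers arrive from outside only at node $1$, with rate $\lambda>0$. For $i\to j$, $\mu_{i,j}>0$ is the rate at which node $i$ serves customers and sends them to node $j$; $\mu_{i,0}\ge 0$ is the rate at which node $i$ serves customers who then leave the system. Let $\mu_i=\sum_{k:i\to k}\mu_{i,k}+\mu_{i,0}>0$. Arrival rates: $\Lambda_1=\lambda$ and $\Lambda_j=\Lambda_i\mu_{i,j}/\mu_i$ if $i\to j$. Utilities $\rho_i=\Lambda_i/\mu_i$, assumed to satisfy $\max_i\rho_i<1$; also $\lambda+\sum_i\mu_i=1$. Let $\mu'_{i,0}=\Lambda_i\mu_{i,0}/\mu_i$. A bitmap $b\in\{0,1\}^d$ encodes which nodes are nonempty ($b(i)=1$) or empty ($b(i)=0$); $b'\ge b$ means $b'(i)\ge b(i)$ for all $i$. Effective rates (defined recursively from the leaves up): $M_i(b)=\mu_i$ if $b(i)=1$, and $M_i(b)=\min\big(\mu_i,\ \sum_{k:i\to k}M_k(b)+\mu'_{i,0}\big)$ if $b(i)=0$. The effective gradient of $b$ is $q\in\mathbb{R}^d$ with $q(i)=2\log(\Lambda_i/M_i(b))$. Simple rates: $m_i(b)=\mu_i$ if $b(i)=1$, and $m_i(b)=\sum_{k:i\to k}m_k(b)+\mu'_{i,0}$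 if $b(i)=0$. The simple gradient of $b$ is $q$ with $q(i)=2\log(\Lambda_i/m_i(b))$. *)

From Stdlib Require Import Reals List Arith.
Import ListNotations.
Open Scope R_scope.

(* Nodes are the naturals 1..d; node 1 is the root.  The tree is given by a
   parent map [par]: for 2 <= j <= d, (par j) -> j, i.e. j is a child of par j.
   Index 0 is reserved for "outside": [mu i 0] is the exit rate of node i. *)

Definition is_node (d i : nat) : Prop := (1 <= i <= d)%nat.

Definition edge (d : nat) (par : nat -> nat) (i j : nat) : Prop :=
  (2 <= j <= d)%nat /\ par j = i.

Definition is_tree (d : nat) (par : nat -> nat) : Prop :=
  (1 <= d)%nat /\
  (forall j, (2 <= j <= d)%nat -> (1 <= par j <= d)%nat) /\
  (forall j, (1 <= j <= d)%nat -> exists n, Nat.iter n par j = 1%nat).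

Definition children (d : nat) (par : nat -> nat) (i : nat) : list nat :=
  filter (fun j => Nat.eqb (par j) i) (seq 2 (d - 1)).

Definition sumR (l : list nat) (f : nat -> R) : R :=
  fold_right (fun k acc => f k + acc) 0 l.

Definition muT (d : nat) (par : nat -> nat) (mu : nat -> nat -> R) (i : nat) : R :=
  sumR (children d par i) (mu i) + mu i 0%nat.

(* Arrival rates, root-down, computed with fuel (depth < d, so fuel d suffices). *)
Fixpoint LamF (d : nat) (par : nat -> nat) (mu : nat -> nat -> R) (lam : R)
  (fuel : nat) (j : nat) : R :=
  match fuel with
  | O => lam
  | S n => if Nat.eqb j 1 then lam
           else LamF d par mu lam n (par j) * mu (par j) j / muT d par mu (par j)
  end.

Definition Lam d par mu lam (j : nat) : R := LamF d par mu lam d j.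

Definition mu'0 d par mu lam (i : nat) : R :=
  Lam d par mu lam i * mu i 0%nat / muT d par mu i.

(* Effective rates, leaves-up, with fuel (subtree height < d, so fuel d suffices). *)
Fixpoint MeffF d par mu lam (b : nat -> bool) (fuel : nat) (i : nat) : R :=
  match fuel with
  | O => muT d par mu i
  | S n => if b i then muT d par mu i
           else Rmin (muT d par mu i)
                  (sumR (children d par i) (MeffF d par mu lam b n) + mu'0 d par mu lam i)
  end.

Definition Meff d par mu lam b (i : nat) : R := MeffF d par mu lam b d i.

Fixpoint msimF d par mu lam (b : nat -> bool) (fuel : nat) (i : nat) : R :=
  match fuel with
  | O => muT d par mu i
  | S n => if b i then muT d par mu i
           else sumR (children d par i) (msimF d par mu lam b n) + mu'0 d par mu lam i
  end.

Definition msim d par mu lam b (i : nat) : R := msimF d par mu lam b d i.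

Definition eff_gradient d par mu lam b (i : nat) : R :=
  2 * ln (Lam d par mu lam i / Meff d par mu lam b i).

Definition simple_gradient d par mu lam b (i : nat) : R :=
  2 * ln (Lam d par mu lam i / msim d par mu lam b i).

Definition network_assumptions (d : nat) (par : nat -> nat) (mu : nat -> nat -> R)
  (lam : R) : Prop :=
  is_tree d par /\
  0 < lam /\
  (forall i j, edge d par i j -> 0 < mu i j) /\
  (forall i, is_node d i -> 0 <= mu i 0%nat) /\
  (forall i, is_node d i -> 0 < muT d par mu i) /\
  (forall i, is_node d i -> Lam d par mu lam i / muT d par mu i < 1) /\
  lam + sumR (seq 1 d) (muT d par mu) = 1.

Definition bm_ge (d : nat) (b' b : nat -> bool) : Prop :=
  forall i, is_node d i -> b i = true -> b' i = true.

From Stdlib Require Import Reals List Arith Lia Lra ConstructiveEpsilon.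
Open Scope R_scope.

(* Enlarge [b] by the nodes that are "saturated",
   i.e. where the effective rate is capped by the service rate:
   bbar i = b i || (mu_i <= sum_{i->k} M_k(b) + mu'_{i,0}).
   At such a node both M_i(b) and m_i(bbar) equal mu_i; at every other node
   the minimum defining M_i(b) is attained by the sum over the children, which
   is exactly the recursion defining m_i(bbar).  Hence M(b) = m(bbar) by
   induction from the leaves up, and the gradients coincide. *)

Definition depth (par : nat -> nat) (k t : nat) : Prop :=
  Nat.iter t par k = 1%nat /\ forall s, Nat.iter s par k = 1%nat -> (t <= s)%nat.

Lemma depth_child par k t c :
  depth par k t -> par c = k -> c <> 1%nat -> depth par c (S t).
Proof.
  intros [Hroot Hmin] Hpar Hc. split.
  - rewrite Nat.iter_succ_r, Hpar; exact Hroot.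
  - intros [|s] Hs; [contradiction|].
    rewrite Nat.iter_succ_r, Hpar in Hs. specialize (Hmin s Hs). lia.
Qed.

Lemma ancestors_distinct par k t a c :
  depth par k t -> (a < c <= t)%nat -> Nat.iter a par k <> Nat.iter c par k.
Proof.
  intros [Hroot Hmin] Hac E.
  assert (Hshort : Nat.iter (t - c + a) par k = 1%nat).
  { rewrite Nat.iter_add, E, <- Nat.iter_add.
    replace (t - c + c)%nat with t by lia. exact Hroot. }
  specialize (Hmin _ Hshort). lia.
Qed.

Section Tree.
Variables (d : nat) (par : nat -> nat).
Hypothesis Htree : is_tree d par.

Lemma depth_exists k : is_node d k -> exists t, depth par k t.
Proof.
  intros Hk. destruct Htree as [_ [_ Hreach]].
  destruct (epsilon_smallest (fun n => Nat.iter n par k = 1%nat)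
              (fun n => Nat.eq_dec _ _) (Hreach k Hk)) as [t Ht].
  exists t; exact Ht.
Qed.

Lemma ancestors_are_nodes k t a :
  is_node d k -> depth par k t -> (a <= t)%nat -> is_node d (Nat.iter a par k).
Proof.
  intros Hk [_ Hmin]. destruct Htree as [_ [Hpar _]].
  induction a as [|a IH]; intros Ha; [exact Hk|].
  assert (Hnr : Nat.iter a par k <> 1%nat) by (intros E; specialize (Hmin a E); lia).
  specialize (IH ltac:(lia)). unfold is_node in *. simpl. apply Hpar. lia.
Qed.

(* Pigeonhole: the t+1 distinct ancestors of a node of depth t lie in {1..d}. *)
Lemma depth_lt k t : is_node d k -> depth par k t -> (t < d)%nat.
Proof.
  intros Hk Hdep.
  set (l := map (fun a => Nat.iter a par k) (seq 0 (S t))).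
  assert (Hnodup : NoDup l).
  { apply NoDup_map_NoDup_ForallPairs; [|apply seq_NoDup].
    intros a c Ha Hc E. apply in_seq in Ha, Hc.
    destruct (lt_eq_lt_dec a c) as [[L|L]|L]; auto; exfalso.
    - exact (ancestors_distinct par k t a c Hdep ltac:(lia) E).
    - exact (ancestors_distinct par k t c a Hdep ltac:(lia) (eq_sym E)). }
  assert (Hincl : incl l (seq 1 d)).
  { intros x Hx. apply in_map_iff in Hx. destruct Hx as [a [<- Ha]].
    apply in_seq in Ha.
    pose proof (ancestors_are_nodes k t a Hk Hdep ltac:(lia)) as Hn.
    unfold is_node in Hn. apply in_seq. lia. }
  pose proof (NoDup_incl_length Hnodup Hincl) as Hlen.
  unfold l in Hlen. rewrite length_map, !length_seq in Hlen. lia.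
Qed.

Lemma children_spec i c :
  In c (children d par i) -> is_node d c /\ c <> 1%nat /\ par c = i.
Proof.
  unfold children. intros H. apply filter_In in H. destruct H as [H1 H2].
  apply in_seq in H1. apply Nat.eqb_eq in H2. unfold is_node. lia.
Qed.

(* Fuel n suffices at node k: every leaf below k is within n recursive calls. *)
Definition enough_fuel (n k : nat) : Prop :=
  exists t, depth par k t /\ (d <= t + n)%nat.

Lemma enough_fuel_full k : is_node d k -> enough_fuel d k.
Proof.
  intros Hk. destruct (depth_exists k Hk) as [t Ht]. exists t. split; [exact Ht|lia].
Qed.

Lemma enough_fuel_ind (P : nat -> nat -> Prop) :
  (forall n k, is_node d k ->
     (forall c, In c (children d par k) -> enough_fuel n c /\ P n c) -> P (S n) k) ->
  forall n k, is_node d k -> enough_fuel n k -> P n k.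
Proof.
  intros Hstep. induction n as [|n IH]; intros k Hk [t [Ht Hle]].
  - pose proof (depth_lt k t Hk Ht). lia.
  - apply Hstep; [exact Hk|]. intros c Hc.
    destruct (children_spec k c Hc) as [Hcn [Hc1 Hpar]].
    assert (Hfuel : enough_fuel n c)
      by (exists (S t); split; [exact (depth_child par k t c Ht Hpar Hc1)|lia]).
    split; [exact Hfuel|]. exact (IH c Hcn Hfuel).
Qed.

Lemma sumR_ext l f g : (forall x, In x l -> f x = g x) -> sumR l f = sumR l g.
Proof.
  induction l as [|x l IH]; intros H; simpl; [reflexivity|].
  rewrite H by (left; reflexivity).
  rewrite IH by (intros y Hy; apply H; right; exact Hy). reflexivity.
Qed.

Section Rates.
Variables (mu : nat -> nat -> R) (lam : R) (b : nat -> bool).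

Lemma MeffF_more_fuel n k :
  is_node d k -> enough_fuel n k ->
  forall m, (n <= m)%nat -> MeffF d par mu lam b m k = MeffF d par mu lam b n k.
Proof.
  revert n k.
  apply (enough_fuel_ind (fun n k => forall m, (n <= m)%nat ->
           MeffF d par mu lam b m k = MeffF d par mu lam b n k)).
  intros n k _ Hch [|m] Hm; [lia|].
  simpl. destruct (b k); [reflexivity|].
  rewrite (sumR_ext _ (MeffF d par mu lam b m) (MeffF d par mu lam b n));
    [reflexivity|].
  intros c Hc. apply (proj2 (Hch c Hc)). lia.
Qed.

Lemma MeffF_fuel_irrelevant n m k :
  is_node d k -> enough_fuel n k -> enough_fuel m k ->
  MeffF d par mu lam b m k = MeffF d par mu lam b n k.
Proof.
  intros Hk Hn Hm. destruct (Nat.le_ge_cases n m).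
  - now apply MeffF_more_fuel.
  - symmetry. now apply MeffF_more_fuel.
Qed.

Definition saturated (i : nat) : bool :=
  if Rle_dec (muT d par mu i)
       (sumR (children d par i) (Meff d par mu lam b) + mu'0 d par mu lam i)
  then true else false.

Definition bbar (i : nat) : bool := b i || saturated i.

Lemma bbar_ge : bm_ge d bbar b.
Proof. intros i _ Hi. unfold bbar. rewrite Hi. reflexivity. Qed.

Lemma msimF_bbar n k :
  is_node d k -> enough_fuel n k ->
  msimF d par mu lam bbar n k = MeffF d par mu lam b n k.
Proof.
  revert n k.
  apply (enough_fuel_ind (fun n k =>
           msimF d par mu lam bbar n k = MeffF d par mu lam b n k)).
  intros n k _ Hch. simpl.
  assert (Hfull : sumR (children d par k) (Meff d par mu lam b)
                  = sumR (children d par k) (MeffF d par mu lam b n)).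
  { apply sumR_ext. intros c Hc. destruct (children_spec k c Hc) as [Hcn _].
    apply MeffF_fuel_irrelevant; [exact Hcn|apply Hch, Hc|apply enough_fuel_full, Hcn]. }
  assert (Hsim : sumR (children d par k) (msimF d par mu lam bbar n)
                 = sumR (children d par k) (MeffF d par mu lam b n))
    by (apply sumR_ext; intros c Hc; apply Hch, Hc).
  rewrite Hsim. unfold bbar at 1, saturated at 1. rewrite Hfull.
  destruct (b k); simpl; [reflexivity|].
  (* Saturated: both rates are mu_k; otherwise the minimum is the children sum. *)
  unfold Rmin. destruct (Rle_dec _ _); simpl; reflexivity.
Qed.

End Rates.
End Tree.

Theorem mainTheorem1 (d : nat) (par : nat -> nat) (mu : nat -> nat -> R) (lam : R)
  (Hnet : network_assumptions d par mu lam) (b : nat -> bool) :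
  exists bbar : nat -> bool,
    bm_ge d bbar b /\
    forall i, is_node d i ->
      eff_gradient d par mu lam b i = simple_gradient d par mu lam bbar i.
Proof.
  destruct Hnet as [Htree _].
  exists (bbar d par mu lam b). split; [apply bbar_ge|].
  intros i Hi. unfold eff_gradient, simple_gradient, Meff, msim.
  rewrite (msimF_bbar d par Htree mu lam b d i Hi (enough_fuel_full d par Htree i Hi)).
  reflexivity.
Qed.
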